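(* Let $n\ge1$ and let $\mathcal{LF}_2:S_n\to\mathbb{N}$ be the Lehmer factorial norm. Then: (i) $\mathcal{LF}_2(e_n)=0$ is the minimal value, and $e_n$ is the only permutation attaining it. (ii) $\mathcal{LF}_2(\bar e_n)=2^n-(n+1)$ is the maximal value, and $\bar e_n$ is the only permutation attaining it. (iii) For $s=1,\dots,n-1$, $\mathcal{LF}_2(\sigma_s)=2^{n-1-s}$; hence $\mathcal{LF}_2(\sigma_1)>\mathcal{LF}_2(\sigma_2)>\dots>\mathcal{LF}_2(\sigma_{n-1})$. (iv) The inclusion $\iota_n:S_n\to S_{n+1}$, $\iota_n(\sigma)=(1,\sigma(1)+1,\sigma(2)+1,\dots,\sigma(n)+1)$, satisfies $\mathcal{LF}_2(\iota_n(\sigma))=\mathcal{LF}_2(\sigma)$ for all $\sigma\in S_n$. (v) $\mathcal{LF}_2(\sigma)=\mathcal{LF}_2(\sigma^{-1})$ for all $\sigma\in S_n$. (vi) $\mathcal{LF}_2(\sigma\tau)\le\mathcal{LF}_2(\sigma)+\mathcal{LF}_2(\tau)$ for all $\sigma,\tau\in S_n$. (vii) For $\sigma\in S_n$, $s\in\{1,\dots,n-1\}$ and $\tau=\sigma\sigma_s$, $$|\mathcal{LF}_2(\tau)-\mathcal{LF}_2(\sigma)|=2^{-\min\{c_s(\sigma),c_{s+1}(\sigma)\}}\,\mathcal{LF}_2(\sigma_s).$$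
   Context: $[n]=\{1,\dots,n\}$, $S_n$ is the group of permutations of $[n]$, a permutation is written $\sigma=(\sigma(1),\dots,\sigma(n))$, composition is $(\sigma\tau)(i)=\sigma(\tau(i))$. $e_n=(1,2,\dots,n)$ is the identity and $\bar e_n=(n,n-1,\dots,1)$ its reverse. For $s=1,\dots,n-1$, $\sigma_s$ is the adjacent transposition swapping $s$ and $s+1$. For $\sigma\in S_n$ and $i\in[n]$, $c_i(\sigma)=|\{j\in[n]: j>i \text{ and } \sigma(j)<\sigma(i)\}|$ (Lehmer code entries), and $k_i(\sigma)=c_{n-i}(\sigma)$ for $i=0,\dots,n-1$. The Lehmer factorial norm (with base 2) is $\mathcal{LF}_2(\sigma)=\sum_{i=0}^{n-1}\left[2^i-2^{i-k_i(\sigma)}\right]$. *)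

(* Permutations of [n] are modelled by 'S_n = {perm 'I_n},
   with 0-based positions/values: paper position i (1..n) is ordinal i-1. *)
From mathcomp Require Import all_boot all_order all_algebra all_fingroup.
Set Implicit Arguments. Unset Strict Implicit. Unset Printing Implicit Defensive.

(* Paper composition (sigma tau)(i) = sigma(tau(i)).
   MathComp's product is (s * t) x = t (s x), so sigma tau = t * s. *)
Definition paper_comp n (sigma tau : 'S_n) : 'S_n := (tau * sigma)%g.

Definition e_perm n : 'S_n := 1%g.

Definition ebar n : 'S_n := perm (@rev_ord_inj n).

(* sigma_s (paper, 1 <= s <= n-1): the adjacent transposition swapping
   s and s+1, i.e. 0-based ordinals s-1 and s. *)
Definition adjT n (s : nat) : 'S_n :=
  match insub s.-1, insub s with
  | Some a, Some b => tperm a b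
  | _, _ => 1%g
  end.

(* Lehmer code: for 0-based position i, lehmer sigma i is the paper's
   c_{i+1}(sigma) = #{ j > i : sigma(j) < sigma(i) }. *)
Definition lehmer n (sigma : 'S_n) (i : 'I_n) : nat :=
  #|[set j : 'I_n | (i < j) && (sigma j < sigma i)]|.

(* k_i(sigma) = c_{n-i}(sigma), i = 0..n-1; paper index n-i is 0-based n-1-i *)
Definition kcode n (sigma : 'S_n) (i : 'I_n) : nat := lehmer sigma (rev_ord i).

(* Lehmer factorial norm with base 2 (note k_i <= i, so no truncation issue) *)
Definition LF2 n (sigma : 'S_n) : nat :=
  \sum_(i < n) (2 ^ i - 2 ^ (i - kcode sigma i)).

Definition iota_incl n (sigma : 'S_n) : 'S_n.+1 := lift_perm ord0 ord0 sigma.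

From mathcomp Require Import all_boot all_algebra all_fingroup zify.
Import GRing.Theory Num.Theory.
Set Implicit Arguments. Unset Strict Implicit. Unset Printing Implicit Defensive.

(* LF2 s counts the nonempty sets T of positions whose least position does not
   carry the least value of s on T (the misaligned sets): among the 2^(n-p-1)
   sets with least element p exactly 2^(n-p-1-c_p) are aligned, and summing the
   differences over p gives the defining sum.  In this form (v) holds because
   T is aligned for s iff s(T) is aligned for s^-1, and (vi) because T is
   aligned for t o s as soon as T is aligned for s and s(T) is aligned for t.
   No set is misaligned for the identity, every set with two or more elements
   is misaligned for the reverse, and a two-element set {p < x} is misaligned
   iff s x < s p; this gives (i) and (ii).  Composing with an adjacent
   transposition only swaps the Lehmer entries c_s and c_(s+1), adding one to
   one of them, which gives (iii) and (vii). *)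

Definition lehmer_weight (m c : nat) : nat := 2 ^ m - 2 ^ (m - c).

Lemma lehmer_weight0 m : lehmer_weight m 0 = 0.
Proof. by rewrite /lehmer_weight subn0 subnn. Qed.

Lemma card_ord_gt n (p : 'I_n) : #|[set x : 'I_n | p < x]| = n - p.+1.
Proof.
have count_gt m : count (fun k => p < k) (iota 0 m) = m - p.+1.
  elim: m => [|m IHm] //; rewrite -[m.+1]addn1 iotaD count_cat IHm /=; lia.
by rewrite cardsE cardE /enum_mem size_filter -enumT -count_gt -val_enum_ord count_map.
Qed.

Lemma lehmer_le n (s : 'S_n) (p : 'I_n) : lehmer s p <= n - p.+1.
Proof.
rewrite -card_ord_gt; apply: subset_leq_card; apply/subsetP => x.
by rewrite !inE => /andP [].
Qed.

Lemma LF2_lehmer n (s : 'S_n) :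
  LF2 s = \sum_(p < n) lehmer_weight (n - p.+1) (lehmer s p).
Proof.
rewrite /LF2 (reindex_inj rev_ord_inj) /=.
by apply: eq_bigr => p _; rewrite /kcode rev_ordK.
Qed.

Lemma lehmer1 n (p : 'I_n) : lehmer 1%g p = 0.
Proof. by apply: eq_card0 => x; rewrite !inE !perm1; apply/negP => /andP []; lia. Qed.

Lemma LF2_1 n : LF2 (1%g : 'S_n) = 0.
Proof. by rewrite LF2_lehmer big1 // => p _; rewrite lehmer1 lehmer_weight0. Qed.

Definition min_aligned n (s : 'S_n) (T : {set 'I_n}) : bool :=
  [exists p in T, [forall x in T, (p <= x) && (s p <= s x)]].

Definition misaligned_sets n (s : 'S_n) : {set {set 'I_n}} :=
  [set T : {set 'I_n} | (T != set0) && ~~ min_aligned s T].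

Definition pointed_sets n (p : 'I_n) (U : {set 'I_n}) : {set {set 'I_n}} :=
  [set T : {set 'I_n} | (p \in T) && (T \subset p |: U)].

Lemma card_pointed_sets n (p : 'I_n) (U : {set 'I_n}) :
  p \notin U -> #|pointed_sets p U| = 2 ^ #|U|.
Proof.
move=> pU; have -> : pointed_sets p U = [set p |: S | S in powerset U].
  apply/setP => T; rewrite inE; apply/andP/imsetP => [[pT TU] | [S]].
    by exists (T :\ p); rewrite ?setD1K // inE subDset.
  by rewrite inE => SU ->; rewrite setU11 setUS.
rewrite card_in_imset ?card_powerset // => S1 S2; rewrite !inE => S1U S2U.
have notin (S : {set 'I_n}) : S \subset U -> p \notin S.
  by move=> SU; apply: contra pU; apply: (subsetP SU).
by rewrite -{2}(setU1K (notin _ S1U)) -{2}(setU1K (notin _ S2U)) => ->.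
Qed.

Definition aligned_at n (s : 'S_n) (p : 'I_n) : {set {set 'I_n}} :=
  pointed_sets p [set x : 'I_n | (p < x) && (s p < s x)].

Lemma aligned_atP n (s : 'S_n) (p : 'I_n) (T : {set 'I_n}) :
  reflect (p \in T /\ forall x, x \in T -> (p <= x) && (s p <= s x))
          (T \in aligned_at s p).
Proof.
rewrite inE; apply: (iffP andP) => [[pT /subsetP TU] | [pT Tge]].
  split=> // x /TU; rewrite !inE => /predU1P [-> | /andP [/ltnW -> /ltnW ->]] //.
  by rewrite !leqnn.
split=> //; apply/subsetP => x xT; rewrite !inE; case: (eqVneq x p) => //= xp.
have /andP [px spx] := Tge x xT.
by rewrite !ltn_neqAle px spx !val_eqE (inj_eq perm_inj) ![_ == x]eq_sym xp.
Qed.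

Lemma card_aligned_at n (s : 'S_n) (p : 'I_n) :
  #|aligned_at s p| = 2 ^ (n - p.+1 - lehmer s p).
Proof.
rewrite card_pointed_sets ?inE ?ltnn //; congr (2 ^ _).
rewrite -card_ord_gt -(cardsID [set x : 'I_n | s x < s p]).
have -> : [set x : 'I_n | p < x] :&: [set x | s x < s p]
          = [set x : 'I_n | (p < x) && (s x < s p)].
  by apply/setP => x; rewrite !inE.
rewrite addKn; apply: eq_card => x; rewrite !inE -leqNgt.
case: (ltnP p x) => px; rewrite ?andbT ?andbF // ltn_neqAle.
by case: eqP => [/ord_inj/perm_inj eq_px | //]; rewrite eq_px ltnn in px.
Qed.

Lemma min_alignedP n (s : 'S_n) (T : {set 'I_n}) :
  reflect (exists p, T \in aligned_at s p) (min_aligned s T).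
Proof.
apply: (iffP existsP) => [[p /andP [pT /forallP Tge]] | [p /aligned_atP [pT Tge]]].
  by exists p; apply/aligned_atP; split=> // x xT; apply: (implyP (Tge x)).
by exists p; rewrite pT; apply/forallP => x; apply/implyP; apply: Tge.
Qed.

Lemma aligned_at_uniq n (s s' : 'S_n) (p q : 'I_n) (T : {set 'I_n}) :
  T \in aligned_at s p -> T \in aligned_at s' q -> p = q.
Proof.
move=> /aligned_atP [pT Tp] /aligned_atP [qT Tq].
have /andP [pq _] := Tp q qT; have /andP [qp _] := Tq p pT.
by apply: val_inj; apply/eqP; rewrite eqn_leq pq qp.
Qed.

Lemma least_aligned_at n (T : {set 'I_n}) :
  T != set0 -> exists p, T \in aligned_at 1%g p.
Proof.
case/set0Pn => x0 x0T; have [p pT pmin] := arg_minnP (fun x : 'I_n => val x) x0T.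
by exists p; apply/aligned_atP; split=> // x xT; rewrite !perm1 andbb pmin.
Qed.

Lemma card_misaligned_sets n (s : 'S_n) :
  #|misaligned_sets s| = \sum_(p < n) lehmer_weight (n - p.+1) (lehmer s p).
Proof.
have weightE (p : 'I_n) :
    lehmer_weight (n - p.+1) (lehmer s p) = #|aligned_at 1%g p :\: aligned_at s p|.
  have sub : aligned_at s p \subset aligned_at 1%g p.
    apply/subsetP => T /aligned_atP [pT Tge]; apply/aligned_atP.
    by split=> // x /Tge /andP [px _]; rewrite !perm1 px.
  by rewrite cardsD (setIidPr sub) !card_aligned_at lehmer1 subn0.
under eq_bigr do rewrite weightE -sum1_card big_mkcond /=.
rewrite exchange_big /= -sum1_card big_mkcond /=; apply: eq_bigr => T _.
rewrite inE; case: (eqVneq T set0) => [-> | T0] /=.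
  by rewrite big1 // => p _; rewrite !inE andFb andbF.
have [p Tp] := least_aligned_at T0.
rewrite (bigD1 p) //= big1 => [|q qp]; last first.
  rewrite inE; case: ifP => // /andP [_ /(aligned_at_uniq Tp) pq].
  by rewrite pq eqxx in qp.
rewrite addn0 inE Tp andbT; congr (nat_of_bool (~~ _)).
apply/min_alignedP/idP => [[q Tq] | Tsp]; last by exists p.
by rewrite (aligned_at_uniq Tp Tq).
Qed.

Lemma LF2_misaligned n (s : 'S_n) : LF2 s = #|misaligned_sets s|.
Proof. by rewrite LF2_lehmer card_misaligned_sets. Qed.

Lemma min_aligned_imset n (s : 'S_n) (T : {set 'I_n}) :
  min_aligned (s^-1)%g (s @: T) = min_aligned s T.
Proof.
apply/existsP/existsP => [[y /andP [/imsetP [p pT ->] /forallP Tge]] |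
                          [p /andP [pT /forallP Tge]]].
  exists p; rewrite pT; apply/forallP => x; apply/implyP => xT.
  by have := implyP (Tge (s x)) (imset_f _ xT); rewrite !permK andbC.
exists (s p); rewrite imset_f //; apply/forallP => y; apply/implyP => /imsetP [x xT ->].
by have := implyP (Tge x) xT; rewrite !permK andbC.
Qed.

Lemma LF2V n (s : 'S_n) : LF2 (s^-1)%g = LF2 s.
Proof.
rewrite !LF2_misaligned.
have -> : misaligned_sets s
          = (fun T : {set 'I_n} => s @: T) @^-1: misaligned_sets (s^-1)%g.
  by apply/setP => T; rewrite !inE imset_eq0 min_aligned_imset.
by rewrite card_preimset //; apply/imset_inj/perm_inj.
Qed.

Lemma min_alignedM n (s t : 'S_n) (T : {set 'I_n}) :
  min_aligned s T -> min_aligned t (s @: T) -> min_aligned (s * t)%g T.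
Proof.
move=> /min_alignedP [p /aligned_atP [pT Tp]].
move=> /min_alignedP [q /aligned_atP [qT sTq]].
have sp_q : s p = q.
  case/imsetP: qT sTq => r rT -> sTq; apply: val_inj; apply/eqP; rewrite eqn_leq.
  have /andP [_ ->] := Tp r rT.
  by have /andP [-> _] := sTq (s p) (imset_f _ pT).
apply/min_alignedP; exists p; apply/aligned_atP; split=> // x xT.
have /andP [-> _] := Tp x xT.
by have /andP [_] := sTq (s x) (imset_f _ xT); rewrite !permM sp_q.
Qed.

Lemma leq_LF2M n (s t : 'S_n) : LF2 (s * t)%g <= LF2 s + LF2 t.
Proof.
rewrite !LF2_misaligned.
have sub : misaligned_sets (s * t)%g \subset
           misaligned_sets s :|: (fun T : {set 'I_n} => s @: T) @^-1: misaligned_sets t.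
  apply/subsetP => T; rewrite !inE imset_eq0 => /andP [-> not_al] /=.
  by apply: contraR not_al; rewrite negb_or !negbK => /andP [/min_alignedM]; apply.
apply: leq_trans (subset_leq_card sub) _.
apply: leq_trans (leq_card_setU _ _) _.
by rewrite card_preimset //; apply/imset_inj/perm_inj.
Qed.

Lemma perm_ltn_neq n (s : 'S_n) (p x : 'I_n) : p < x -> s x != s p :> nat.
Proof. by move=> px; apply: contraTneq px => /ord_inj/perm_inj ->; rewrite ltnn. Qed.

Lemma perm_incr_ge n (s : 'S_n) (x : 'I_n) :
  (forall p y : 'I_n, p < y -> s p < s y) -> x <= s x.
Proof.
move=> s_incr; suff le_s k (y : 'I_n) : val y = k -> k <= s y by apply: le_s.
elim: k y => [//| k IHk] y yk.
have kn : k < n by have := ltn_ord y; rewrite yk; lia.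
have := IHk (Ordinal kn) erefl; have := s_incr (Ordinal kn) y; rewrite yk /=; lia.
Qed.

Lemma perm_incr_eq1 n (s : 'S_n) :
  (forall p x : 'I_n, p < x -> s p < s x) -> s = 1%g.
Proof.
move=> s_incr; have sV_incr (p x : 'I_n) : p < x -> (s^-1)%g p < (s^-1)%g x.
  move=> px; case: ltngtP => // [/s_incr | /ord_inj/(congr1 s)]; rewrite !permKV.
    by rewrite ltnNge (ltnW px).
  by move=> xp; rewrite xp ltnn in px.
apply/permP => x; apply/val_inj/eqP; rewrite perm1 eqn_leq perm_incr_ge // andbT.
by have := perm_incr_ge (s x) sV_incr; rewrite permK.
Qed.

Lemma ebarK n : (ebar n * ebar n = 1)%g.
Proof. by apply/permP => x; rewrite permM perm1 /ebar !permE rev_ordK. Qed.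

Lemma perm_decr_ebar n (s : 'S_n) :
  (forall p x : 'I_n, p < x -> s x < s p) -> s = ebar n.
Proof.
move=> s_decr.
have s_ebar_incr : forall p x : 'I_n, p < x -> (s * ebar n)%g p < (s * ebar n)%g x.
  move=> p x /s_decr; rewrite !permM /ebar !permE /=; have := ltn_ord (s p); lia.
by rewrite -[s]mulg1 -(ebarK n) mulgA (perm_incr_eq1 s_ebar_incr) mul1g.
Qed.

Lemma min_aligned_pair n (s : 'S_n) (p x : 'I_n) :
  p < x -> min_aligned s [set p; x] = (s p < s x).
Proof.
move=> px; apply/min_alignedP/idP => [[q /aligned_atP [qT Tq]] | spx].
  have /andP [qp _] := Tq p (set21 p x); have /andP [_ sqx] := Tq x (set22 p x).
  have q_eq : q = p.
    by move: qT qp; rewrite !inE => /orP [/eqP // | /eqP ->]; rewrite leqNgt px.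
  by rewrite ltn_neqAle eq_sym perm_ltn_neq // -q_eq.
exists p; apply/aligned_atP; split; first exact: set21.
by move=> y; rewrite !inE => /orP [] /eqP ->; rewrite ?leqnn // (ltnW px) (ltnW spx).
Qed.

Lemma misaligned_pair n (s : 'S_n) (p x : 'I_n) :
  p < x -> ([set p; x] \in misaligned_sets s) = (s x < s p).
Proof.
move=> px; have Tn0 : [set p; x] != set0 by apply/set0Pn; exists p; apply: set21.
by rewrite inE Tn0 min_aligned_pair // -leqNgt leq_eqVlt (negbTE (perm_ltn_neq s px)).
Qed.

Lemma LF2_eq0 n (s : 'S_n) : LF2 s = 0 -> s = 1%g.
Proof.
rewrite LF2_misaligned => /eqP; rewrite cards_eq0 => /eqP no_misaligned.
apply: perm_incr_eq1 => p x px; rewrite ltn_neqAle eq_sym perm_ltn_neq //=.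
by rewrite leqNgt -misaligned_pair // no_misaligned in_set0.
Qed.

Lemma min_aligned1 n (s : 'S_n) (x : 'I_n) : min_aligned s [set x].
Proof.
apply/min_alignedP; exists x; apply/aligned_atP; split; first exact: set11.
by move=> y /set1P ->; rewrite !leqnn.
Qed.

Lemma card_min_aligned_ebar n (T : {set 'I_n}) : min_aligned (ebar n) T -> #|T| <= 1.
Proof.
case/min_alignedP => q /aligned_atP [_ Tq]; rewrite -(cards1 q).
apply/subset_leq_card/subsetP => x xT; rewrite inE; have /andP [qx] := Tq x xT.
rewrite /ebar !permE /= => xq; apply/eqP/ord_inj/eqP; rewrite eqn_leq qx andbT.
by have := ltn_ord x; have := ltn_ord q; lia.
Qed.

Lemma misaligned_sub_ebar n (s : 'S_n) :
  misaligned_sets s \subset misaligned_sets (ebar n).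
Proof.
apply/subsetP => T; rewrite !inE => /andP [T0 not_al]; rewrite T0; apply: contra not_al.
move=> /card_min_aligned_ebar T1; have /cards1P [x ->] : #|T| == 1.
  by rewrite eqn_leq T1 card_gt0.
exact: min_aligned1.
Qed.

Lemma lehmer_ebar n (p : 'I_n) : lehmer (ebar n) p = n - p.+1.
Proof.
rewrite /lehmer -card_ord_gt; apply: eq_card => x; rewrite !inE /ebar !permE /=.
by case: (ltnP p x) => //= px; have := ltn_ord x; lia.
Qed.

Lemma LF2_ebar n : LF2 (ebar n) = 2 ^ n - n.+1.
Proof.
have -> : LF2 (ebar n) = \sum_(i < n) (2 ^ i - 1).
  apply: eq_bigr => i _; rewrite /kcode lehmer_ebar /=.
  rewrite (_ : n - (n - i.+1).+1 = i) ?subnn //.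
  by have := ltn_ord i; lia.
elim: n => [|n IHn]; first by rewrite big_ord0.
by rewrite big_ord_recr /= IHn expnS; have := ltn_expl n (isT : 1 < 2); lia.
Qed.

Lemma leq_LF2_ebar n (s : 'S_n) : LF2 s <= LF2 (ebar n).
Proof. by rewrite !LF2_misaligned subset_leq_card // misaligned_sub_ebar. Qed.

Lemma LF2_eq_ebar n (s : 'S_n) : LF2 s = LF2 (ebar n) -> s = ebar n.
Proof.
rewrite !LF2_misaligned => /subset_cardP /(_ (misaligned_sub_ebar s)) same_misaligned.
apply: perm_decr_ebar => p x px; rewrite -misaligned_pair // same_misaligned.
by rewrite misaligned_pair // /ebar !permE /=; have := ltn_ord x; lia.
Qed.

Lemma sum_eq_off2 n (i j : 'I_n) (f g : 'I_n -> nat) :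
  i != j -> (forall p, p != i -> p != j -> f p = g p) ->
  \sum_(p < n) f p + (g i + g j) = \sum_(p < n) g p + (f i + f j).
Proof.
move=> ij fg; have ji : j != i by rewrite eq_sym.
rewrite [\sum_(p < n) f p](bigD1 i) // [\sum_(p < n) g p](bigD1 i) //=.
rewrite [\sum_(p < n | p != i) f p](bigD1 j) // [\sum_(p < n | p != i) g p](bigD1 j) //=.
rewrite (eq_bigr g) => [|p /andP [pi pj]]; last exact: fg.
lia.
Qed.

Lemma lehmer_weight_swap a ci cj : ci <= cj <= a ->
  lehmer_weight a.+1 cj.+1 + lehmer_weight a ci
  = lehmer_weight a.+1 ci + lehmer_weight a cj + 2 ^ (a - ci).
Proof.
case/andP => le_ij le_ja; rewrite /lehmer_weight subSS (subSn (leq_trans le_ij le_ja)).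
have := leq_pexp2l (isT : 0 < 2) (leq_subr ci a).
have := leq_pexp2l (isT : 0 < 2) (leq_subr cj a).
rewrite !expnS; move: (2 ^ a) (2 ^ (a - ci)) (2 ^ (a - cj)) => A U V; lia.
Qed.

Section AdjacentSwap.
Variables (n : nat) (i j : 'I_n).
Hypothesis j_succ : j = i.+1 :> nat.

Lemma neq_adj : i != j.
Proof. by apply/eqP => ij; move: j_succ; rewrite ij; lia. Qed.

Lemma card_gt_adj (P : pred 'I_n) :
  #|[set x : 'I_n | (i < x) && P x]| = P j + #|[set x : 'I_n | (j < x) && P x]|.
Proof.
rewrite (cardsD1 j) in_set j_succ ltnSn /=; congr (_ + _); apply: eq_card => x.
by rewrite !inE [_.+1 < _]ltn_neqAle -j_succ eq_sym andbA.
Qed.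

Lemma lehmer_tpermM_other (s : 'S_n) (p : 'I_n) :
  p != i -> p != j -> lehmer (tperm i j * s)%g p = lehmer s p.
Proof.
move=> pi pj; rewrite /lehmer -(card_preimset _ (@perm_inj _ (tperm i j))).
have [ip jp] : i != p /\ j != p by rewrite ![_ == p]eq_sym.
apply: eq_card => x; rewrite !inE !permM (tpermD ip jp) tpermK; congr (_ && _).
by move: pi pj; rewrite -!val_eqE /=; case: tpermP => [->|->|//]; rewrite j_succ; lia.
Qed.

Lemma tperm_gt_adj (x : 'I_n) : j < x -> tperm i j x = x.
Proof. by move=> jx; rewrite tpermD // -val_eqE /=; lia. Qed.

Lemma lehmer_tpermM_i (s : 'S_n) :
  lehmer (tperm i j * s)%g i = (s i < s j) + lehmer s j.
Proof.
transitivity #|[set x : 'I_n | (i < x) && (s (tperm i j x) < s j)]|.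
  by apply: eq_card => x; rewrite !inE !permM tpermL.
rewrite card_gt_adj /= tpermR; congr (_ + _); apply: eq_card => x; rewrite !inE.
by case: (ltnP j x) => //= /tperm_gt_adj ->.
Qed.

Lemma lehmer_tpermM_j (s : 'S_n) :
  lehmer (tperm i j * s)%g j + (s j < s i) = lehmer s i.
Proof.
rewrite /lehmer card_gt_adj addnC /=; congr (_ + _); apply: eq_card => x.
by rewrite !inE !permM tpermR; case: (ltnP j x) => //= /tperm_gt_adj ->.
Qed.

Lemma lehmer_le_adj (s : 'S_n) : s i < s j -> lehmer s i <= lehmer s j.
Proof.
move=> sij; rewrite /lehmer card_gt_adj /= ltnNge (ltnW sij) add0n.
apply/subset_leq_card/subsetP => x; rewrite !inE => /andP [-> /= sxi].
exact: ltn_trans sxi sij.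
Qed.

Lemma LF2_tpermM_lt (s : 'S_n) : s i < s j ->
  LF2 (tperm i j * s)%g = LF2 s + 2 ^ (n - j.+1 - lehmer s i).
Proof.
move=> sij; have ts_i : lehmer (tperm i j * s)%g i = (lehmer s j).+1.
  by rewrite lehmer_tpermM_i sij.
have ts_j : lehmer (tperm i j * s)%g j = lehmer s i.
  by have := lehmer_tpermM_j s; rewrite ltnNge (ltnW sij) addn0.
have i_gap : n - i.+1 = (n - j.+1).+1 by have := ltn_ord j; lia.
have := sum_eq_off2
  (f := fun p => lehmer_weight (n - p.+1) (lehmer (tperm i j * s)%g p))
  (g := fun p => lehmer_weight (n - p.+1) (lehmer s p)) neq_adj
  (fun p pi pj => congr1 _ (lehmer_tpermM_other s pi pj)).
rewrite -!LF2_lehmer /= ts_i ts_j i_gap lehmer_weight_swap; first lia.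
by rewrite lehmer_le_adj // lehmer_le.
Qed.

Lemma LF2_tperm_adj : LF2 (tperm i j) = 2 ^ (n - j.+1).
Proof.
by have := @LF2_tpermM_lt 1%g; rewrite mulg1 LF2_1 lehmer1 subn0 !perm1 j_succ; apply.
Qed.

Lemma LF2_tpermM (s : 'S_n) (d := 2 ^ (n - j.+1 - minn (lehmer s i) (lehmer s j))) :
  LF2 (tperm i j * s)%g = LF2 s + d \/ LF2 s = LF2 (tperm i j * s)%g + d.
Proof.
rewrite /d; case: (ltngtP (s i) (s j)) => [sij | sji | /ord_inj/perm_inj eq_ij].
- by left; rewrite (minn_idPl (lehmer_le_adj sij)) LF2_tpermM_lt.
- right; set t := (tperm i j * s)%g.
  have s_tt : (tperm i j * t)%g = s by rewrite /t mulgA tperm2 mul1g.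
  have tij : t i < t j by rewrite !permM tpermL tpermR.
  have <- : lehmer t i = lehmer s j.
    by rewrite -s_tt -lehmer_tpermM_j ltnNge (ltnW tij) addn0.
  have -> : minn (lehmer s i) (lehmer t i) = lehmer t i.
    by rewrite -s_tt lehmer_tpermM_i tij minnC; apply/minn_idPl/leqW/lehmer_le_adj.
  by rewrite -{1}s_tt LF2_tpermM_lt.
- by move: (negbTE neq_adj); rewrite eq_ij eqxx.
Qed.

Lemma LF2_tpermM_dist (R : numFieldType) (s : 'S_n) :
  (`|(LF2 (tperm i j * s)%g)%:R - (LF2 s)%:R|
   = (LF2 (tperm i j))%:R / 2 ^+ minn (lehmer s i) (lehmer s j) :> R)%R.
Proof.
set m := minn _ _; have m_le : m <= n - j.+1.
  by apply: leq_trans (geq_minr _ _) (lehmer_le s j).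
rewrite LF2_tperm_adj -(subnK m_le) expnD natrM !natrX mulfK ?expf_neq0 ?pnatr_eq0 //.
case: (LF2_tpermM s) => ->; [|rewrite distrC];
  by rewrite natrD addrAC subrr add0r normr_nat natrX.
Qed.
End AdjacentSwap.

Lemma adjT_tperm n (i j : 'I_n) : j = i.+1 :> nat -> adjT n j = tperm i j.
Proof. by move=> j_succ; rewrite /adjT [in _.-1]j_succ /= !valK. Qed.

Lemma LF2_adjT n (s : nat) : 0 < s < n -> LF2 (adjT n s) = 2 ^ (n - 1 - s).
Proof.
case/andP=> s_gt0 s_lt_n; have s'_lt_n : s.-1 < n by lia.
have j_succ : Ordinal s_lt_n = (Ordinal s'_lt_n).+1 :> nat by rewrite /= prednK.
by rewrite -[s]/(nat_of_ord (Ordinal s_lt_n)) (adjT_tperm j_succ) LF2_tperm_adj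
  // /= -subnDA add1n.
Qed.

Lemma lehmer_lift_perm0 n (s : 'S_n) : lehmer (lift_perm ord0 ord0 s) ord0 = 0.
Proof. by apply: eq_card0 => x; rewrite !inE lift_perm_id ltn0 andbF. Qed.

Lemma lehmer_lift_perm n (s : 'S_n) (p : 'I_n) :
  lehmer (lift_perm ord0 ord0 s) (lift ord0 p) = lehmer s p.
Proof.
rewrite /lehmer -[in RHS](card_imset _ (@lift_inj _ ord0)); apply: eq_card => x.
case: (unliftP ord0 x) => [y -> | ->].
  by rewrite mem_imset ?inE ?lift_perm_lift ?lift0 ?ltnS //; apply: lift_inj.
rewrite !inE ltn0; apply/esym/imsetP => [[y _ y0]].
by move: (neq_lift ord0 y); rewrite -y0 eqxx.
Qed.

Lemma LF2_lift_perm n (s : 'S_n) : LF2 (lift_perm ord0 ord0 s) = LF2 s.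
Proof.
rewrite !LF2_lehmer big_ord_recl lehmer_lift_perm0 lehmer_weight0 add0n.
by apply: eq_bigr => p _; rewrite lehmer_lift_perm lift0 subSS.
Qed.

Theorem theorem3p6 (n : nat) (hn : (0 < n)%N) :
  (* (i) *)
  (LF2 (e_perm n) = 0%N /\ (forall sigma : 'S_n, (LF2 (e_perm n) <= LF2 sigma)%N)
       /\ (forall sigma : 'S_n, LF2 sigma = LF2 (e_perm n) -> sigma = e_perm n)) /\
  (* (ii) *)
     (LF2 (ebar n) = (2 ^ n - n.+1)%N
       /\ (forall sigma : 'S_n, (LF2 sigma <= LF2 (ebar n))%N)
       /\ (forall sigma : 'S_n, LF2 sigma = LF2 (ebar n) -> sigma = ebar n)) /\
  (* (iii) *)
     ((forall s : nat, (0 < s)%N -> (s < n)%N -> LF2 (adjT n s) = (2 ^ (n - 1 - s))%N)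
       /\ (forall s : nat, (0 < s)%N -> (s.+1 < n)%N ->
             (LF2 (adjT n s.+1) < LF2 (adjT n s))%N)) /\
  (* (iv) *)
     (forall sigma : 'S_n, LF2 (iota_incl sigma) = LF2 sigma) /\
  (* (v) *)
     (forall sigma : 'S_n, LF2 sigma = LF2 (sigma^-1)%g) /\
  (* (vi) *)
     (forall sigma tau : 'S_n, (LF2 (paper_comp sigma tau) <= LF2 sigma + LF2 tau)%N) /\
  (* (vii): paper s = val j = (val i).+1; c_s = lehmer sigma i, c_{s+1} = lehmer sigma j *)
     (forall (sigma : 'S_n) (i j : 'I_n), val j = (val i).+1 ->
        (`|(LF2 (paper_comp sigma (adjT n (val j))))%:R - (LF2 sigma)%:R| =
        (LF2 (adjT n (val j)))%:R / 2 ^+ minn (lehmer sigma i) (lehmer sigma j) :> rat)%R).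
Proof.
have LF2_e : LF2 (e_perm n) = 0 := LF2_1 n.
split; first by rewrite LF2_e; split=> //; split=> // s; apply: LF2_eq0.
split; first by split; [exact: LF2_ebar | split; [exact: leq_LF2_ebar | exact: LF2_eq_ebar]].
split.
  split=> [s s_gt0 s_lt_n | s s_gt0 s_lt_n]; first by rewrite LF2_adjT ?s_gt0.
  by rewrite !LF2_adjT ?s_gt0 ?(ltnW s_lt_n) // ltn_exp2l //; lia.
split; first exact: LF2_lift_perm.
split; first by move=> s; rewrite LF2V.
split; first by move=> s t; rewrite /paper_comp addnC leq_LF2M.
move=> s i j j_succ; rewrite /paper_comp (adjT_tperm j_succ).
exact: LF2_tpermM_dist.
Qed.
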